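(* Let $k\ge d$. Draw $(\mathbf x_1,\dots,\mathbf x_k)\sim\mathrm{VS}_{D_{\mathcal X}}^k$ and then, conditionally on these points, draw $y_i\sim D_{\mathcal Y|\mathbf x=\mathbf x_i}$ independently for $i=1,\dots,k$; call the law of ${\mathbb S}=\{(\mathbf x_1,y_1),\dots,(\mathbf x_k,y_k)\}$ $\mathrm{VS}_D^k$. Then $\mathbb E_{\mathrm{VS}_D^k}[\mathbf w^*({\mathbb S})]=\mathbf w^*_D$.
   Context: $D$ is a probability distribution of $(\mathbf x,y)\in\mathbb R^d\times\mathbb R$ with $\mathbb E\|\mathbf x\|^2<\infty$, $\mathbb E[y^2]<\infty$; $D_{\mathcal X}$ is the marginal of $\mathbf x$ and $D_{\mathcal Y|\mathbf x}$ the conditional law of $y$ given $\mathbf x$. $\boldsymbol\Sigma_{D_{\mathcal X}}:=\mathbb E[\mathbf x\mathbf x^\top]$ is assumed invertible. $\mathbf w^*_D:=\boldsymbol\Sigma_{D_{\mathcal X}}^{-1}\mathbb E_D[\mathbf x y]$ (the minimizer of $\mathbb E_D[(\mathbf x^\top\mathbf w-y)^2]$). For a sample ${\mathbb S}$ with design matrix $\mathbf X\in\mathbb R^{k\times d}$ (rows $\mathbf x_i^\top$) and responses $\mathbf y\in\mathbb R^k$, $\mathbf w^*({\mathbb S}):=\mathbf X^+\mathbf y$ (the least squares solution, $\mathbf X^+$ the Moore–Penrose pseudoinverse). $D_{\mathcal X}^k$ is the law of $k$ i.i.d. draws from $D_{\mathcal X}$, and $\mathrm{VS}_{D_{\mathcal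 X}}^k$ is the probability measure on $(\mathbb R^d)^k$ given by $\mathrm{VS}_{D_{\mathcal X}}^k(A)=\mathbb E_{D_{\mathcal X}^k}[\mathbf 1_A\det(\sum_{i=1}^k\mathbf x_i\mathbf x_i^\top)]/\big(d!\binom kd\det(\boldsymbol\Sigma_{D_{\mathcal X}})\big)$. *)

From HB Require Import structures.
From mathcomp Require Import all_boot all_order all_algebra.
From mathcomp Require Import all_classical all_reals all_analysis.
Set Implicit Arguments. Unset Strict Implicit. Unset Printing Implicit Defensive.
Import Order.TTheory GRing.Theory Num.Theory.
Local Open Scope ring_scope.
Local Open Scope ereal_scope.

(* Points of R^d are d.-tuples of reals, equipped with the library's product
   (= Borel) sigma-algebra on n.-tuple R. *)

Section VolumeSampling.
Context {R : realType} {d : nat}.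
Local Notation V := (d.-tuple R).

(* Moore--Penrose pseudoinverse (real matrices), defined by the Penrose
   conditions; it exists and is unique, so xget picks it. *)
Definition mp_pinv (m n : nat) (A : 'M[R]_(m, n)) : 'M[R]_(n, m) :=
  xget 0%R [set B : 'M[R]_(n, m) |
    [/\ (A *m B *m A = A)%R, (B *m A *m B = B)%R,
        ((A *m B)^T = A *m B)%R & ((B *m A)^T = B *m A)%R]].

Definition design_mx (k : nat) (xs : seq V) : 'M[R]_(k, d) :=
  \matrix_(i < k, j < d) tnth (nth (nseq_tuple d 0%R) xs i) j.

Definition resp_vec (k : nat) (ys : seq R) : 'cV[R]_k :=
  \col_(i < k) nth 0%R ys i.

Definition wstar_sample (k : nat) (xs : seq V) (ys : seq R) : 'cV[R]_d :=
  (mp_pinv (design_mx k xs) *m resp_vec k ys)%R.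

Variables (mu : probability V R)
  (kap : probability_kernel V (measurableTypeR R) R).

Definition Sigma_X : 'M[R]_d :=
  \matrix_(i < d, j < d) fine (\int[mu]_x (tnth x i * tnth x j)%:E).

(* E_D[x y], with D the joint law  x ~ mu, y | x ~ kap x *)
Definition cross_moment : 'cV[R]_d :=
  \col_(i < d) fine (\int[mu]_x \int[kap x]_y (tnth x i * y)%:E).

Definition wstar_D : 'cV[R]_d := (invmx Sigma_X *m cross_moment)%R.

(* integral against D_X^n (iterated; x_1 outermost) *)
Fixpoint int_prodX (n : nat) (F : seq V -> \bar R) : \bar R :=
  match n with
  | 0 => F [::]
  | n'.+1 => \int[mu]_x int_prodX n' (fun s => F (x :: s))
  end.

Fixpoint int_resp (xs : seq V) (G : seq R -> \bar R) : \bar R :=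
  match xs with
  | [::] => G [::]
  | x :: xs' => \int[kap x]_y int_resp xs' (fun ys => G (y :: ys))
  end.

(* volume-sampling density det(X^T X) / (d! C(k,d) det Sigma) w.r.t. D_X^k *)
Definition vs_density (k : nat) (xs : seq V) : R :=
  (\det ((design_mx k xs)^T *m design_mx k xs) /
     ((d`!)%:R * ('C(k, d))%:R * \det Sigma_X))%R.

Definition E_VS (k : nat) (f : seq V -> seq R -> R) : \bar R :=
  int_prodX k (fun xs => (vs_density k xs)%:E * int_resp xs (fun ys => (f xs ys)%:E)).

End VolumeSampling.

(* Write X for the design matrix, m(x) = E[y | x] for the conditional mean and
   X_j(b) for X with its j-th column replaced by b.  Integrating out the
   responses first turns X^+ y into X^+ m, and by Cramer's rule
   det(X^T X) (X^+ m)_j = det(X^T X_j(m)); this also holds when X^T X is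
   singular, both sides being 0.  Expanding this determinant over injections
   f : [d] -> [k] and permutations s of [d] writes it as a signed sum of
   products prod_i x_(f i),i z_(f i),(s i), where z is the row x with its j-th
   entry replaced by m(x).  Since f is injective, each sample point occurs in
   at most one factor, so the expectation under D_X^k factors into moments and
   gives k^_d det(Sigma_j(E[x y])).  Dividing by the normalising constant
   d! C(k,d) det Sigma = k^_d det Sigma and applying Cramer's rule once more
   yields (Sigma^-1 E[x y])_j. *)

From HB Require Import structures.
From mathcomp Require Import all_boot all_order all_algebra.
From mathcomp Require Import all_classical all_reals all_analysis.
From mathcomp Require Import measurable_realfun perm ring lra.
Import Order.TTheory GRing.Theory Num.Theory.

Local Open Scope ring_scope.
Local Open Scope classical_set_scope.

(* Unlike [ae_eq_integral], no measurability is required: the integral is a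
   supremum of integrals of simple functions, which may be cut off on [N]. *)
Section integral_off_null.
Context d (T : measurableType d) (R : realType) (mu : {measure set T -> \bar R}).
Import HBNNSimple.
Local Open Scope ereal_scope.

Lemma ge0_le_integral_off_null (N : set T) (f g : T -> \bar R) :
  measurable N -> mu N = 0 -> (forall x, 0 <= f x) -> (forall x, 0 <= g x) ->
  (forall x, ~ N x -> f x <= g x) -> \int[mu]_x f x <= \int[mu]_x g x.
Proof.
move=> mN N0 f0 g0 fg.
rewrite (ge0_integralTE mu f0) (ge0_integralTE mu g0).
apply: ge_ereal_sup => _ [h /= hf <-].
have mNC : measurable (~` N) by exact: measurableC.
pose h' := proj_nnsfun h mNC.
have -> : sintegral mu h = sintegral mu h'.
  have := integral_nnsfun mu measurableT h; rewrite patch_setT => <-.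
  have := integral_nnsfun mu measurableT h'; rewrite patch_setT => <-.
  apply: ae_eq_integral => //.
  - by apply/measurable_EFinP; exact: measurable_funPT.
  - by apply/measurable_EFinP; exact: measurable_funPT.
  - exists N; split => // x /= /not_implyP [_ hx]; apply: contrapT => Nx; apply: hx.
    by rewrite /h' /= mindicE mem_set// mulr1.
apply: ereal_sup_ubound; exists h' => //= x.
rewrite /h' /= mindicE; have [Nx|Nx] := pselect (N x).
  by rewrite memNset// mulr0.
by rewrite mem_set// mulr1; apply: le_trans (hf x) (fg x Nx).
Qed.

Lemma integral_eq_off_null (N : set T) (f g : T -> \bar R) :
  measurable N -> mu N = 0 ->
  (forall x, ~ N x -> f x = g x) -> \int[mu]_x f x = \int[mu]_x g x.
Proof.
move=> mN N0 fg; rewrite integralE [RHS]integralE.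
have epos_eq (u v : T -> \bar R) : (forall x, ~ N x -> u x = v x) ->
    \int[mu]_x (u^\+ x) = \int[mu]_x (v^\+ x).
  move=> uv; apply/eqP; rewrite eq_le; apply/andP; split;
    apply: (@ge0_le_integral_off_null N) => //; try (move=> x; exact: funepos_ge0);
    by move=> x Nx; rewrite !funeposE uv.
congr (_ - _); first exact: epos_eq.
by rewrite -!funeposN; apply: epos_eq => x Nx; rewrite /= fg.
Qed.

End integral_off_null.

Lemma normr_le1Dsqr (R : realFieldType) (y : R) : `|y| <= 1 + y ^+ 2.
Proof. by have [y0|y0] := ger0P y; nra. Qed.

Section conditional_moments.
Context {dT : measure_display} {T : measurableType dT} {R : realType}.
Variable kap : probability_kernel T (measurableTypeR R) R.
Local Open Scope ereal_scope.

Definition cond_sqmoment (x : T) := \int[kap x]_y (y ^+ 2)%:E.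

Definition finite_sqmoment := [set x | cond_sqmoment x < +oo].

(* Meaningful only where [y] is [kap x]-integrable, e.g. on [finite_sqmoment]. *)
Definition cond_mean (x : T) : R := fine (\int[kap x]_y y%:E).

Lemma cond_sqmoment_ge0 x : 0 <= cond_sqmoment x.
Proof. by apply: integral_ge0 => y _; rewrite lee_fin sqr_ge0. Qed.

Lemma measurable_cond_sqmoment : measurable_fun setT cond_sqmoment.
Proof.
apply: (measurable_fun_integral_kernel (measurable_kernel kap)).
  by move=> y; rewrite lee_fin sqr_ge0.
by apply/measurable_EFinP; exact: exprn_measurable.
Qed.

Lemma measurableC_finite_sqmoment : measurable (~` finite_sqmoment).
Proof.
have -> : ~` finite_sqmoment = setT `&` cond_sqmoment @^-1` [set +oo].
  apply/seteqP; split => x /=.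
    by move=> /negP; rewrite -leNgt leye_eq => /eqP.
  by move=> [_ h]; rewrite /finite_sqmoment /= h ltxx.
exact: measurable_cond_sqmoment (emeasurable_set1 _).
Qed.

Lemma integrable_cond_sqmoment {mu : {measure set T -> \bar R}} :
  \int[mu]_x cond_sqmoment x < +oo -> mu.-integrable setT cond_sqmoment.
Proof.
move=> fin; apply/integrableP; split; first exact: measurable_cond_sqmoment.
by under eq_integral do rewrite gee0_abs ?cond_sqmoment_ge0//.
Qed.

Lemma finite_sqmoment_ae {mu : {measure set T -> \bar R}} :
  \int[mu]_x cond_sqmoment x < +oo -> mu (~` finite_sqmoment) = 0.
Proof.
move=> /integrable_cond_sqmoment intM.
have [B [mB B0 sB]] := integrable_ae measurableT intM.
apply/eqP; rewrite eq_le measure_ge0 andbT -B0.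
apply: le_measure; [apply/mem_set; exact: measurableC_finite_sqmoment|
                    apply/mem_set; exact: mB|].
move=> x /= Gx; apply: sB => /= /(_ I).
by rewrite ge0_fin_numE ?cond_sqmoment_ge0.
Qed.

Lemma integrable_kernel_cst x (c : R) : (kap x).-integrable setT (fun=> c%:E).
Proof.
apply/integrableP; split; first exact: measurable_cst.
have := integral_cst (kap x) (@measurableT _ (measurableTypeR R)) `|c%:E|.
by rewrite /cst => ->; rewrite prob_kernel mule1 ltry.
Qed.

Lemma integrable_kernel_id x :
  finite_sqmoment x -> (kap x).-integrable setT (fun y => y%:E).
Proof.
move=> Gx; apply/integrableP; split.
  by apply/measurable_EFinP; exact: measurable_id.
apply: (@le_lt_trans _ _ (\int[kap x]_y (1%:E + (y ^+ 2)%:E))).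
  apply: ge0_le_integral => //.
  - apply: measurableT_comp; first exact: abse_measurable.
    by apply/measurable_EFinP; exact: measurable_id.
  - apply: emeasurable_funD; first exact: measurable_cst.
    by apply/measurable_EFinP; exact: exprn_measurable.
  by move=> y _; rewrite -EFinD lee_fin normr_le1Dsqr.
rewrite ge0_integralD//.
- have := integral_cst (kap x) (@measurableT _ (measurableTypeR R)) 1.
  rewrite /cst => ->; rewrite prob_kernel mul1e.
  exact: lte_add_pinfty (ltry _) Gx.
- by move=> y _; rewrite lee_fin sqr_ge0.
- by apply/measurable_EFinP; exact: exprn_measurable.
Qed.

Lemma cond_meanE x : finite_sqmoment x -> (cond_mean x)%:E = \int[kap x]_y y%:E.
Proof. by move=> Gx; rewrite fineK// integrable_fin_num// integrable_kernel_id. Qed.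

Lemma measurable_cond_mean : measurable_fun setT cond_mean.
Proof.
apply: (measurableT_comp (fine_measurable measurableT)).
rewrite (_ : (fun x => \int[kap x]_y y%:E) =
   (fun x => \int[kap x]_y ((fun y => y%:E)^\+ y) -
             \int[kap x]_y ((fun y => y%:E)^\- y))); last first.
  by apply/funext => x; rewrite integralE.
apply: emeasurable_funB.
  apply: (measurable_fun_integral_kernel (measurable_kernel kap)).
    by move=> y; exact: funepos_ge0.
  by apply: measurable_funepos; apply/measurable_EFinP; exact: measurable_id.
apply: (measurable_fun_integral_kernel (measurable_kernel kap)).
  by move=> y; exact: funeneg_ge0.
by apply: measurable_funeneg; apply/measurable_EFinP; exact: measurable_id.
Qed.

Lemma integral_kernel_affine x (c a : R) : finite_sqmoment x ->
  \int[kap x]_y (c + a * y)%:E = (c + a * cond_mean x)%:E.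
Proof.
move=> Gx; under eq_integral do rewrite EFinD EFinM.
rewrite integralD//; [|exact: integrable_kernel_cst|]; last first.
  by apply: integrableZl => //; exact: integrable_kernel_id.
have := integral_cst (kap x) (@measurableT _ (measurableTypeR R)) c%:E.
rewrite /cst => ->; rewrite prob_kernel mule1.
by rewrite integralZl// ?integrable_kernel_id// -cond_meanE// -EFinM -EFinD.
Qed.

End conditional_moments.

Section sample_integrals.
Context {R : realType} {d : nat}.
Local Notation V := (d.-tuple R).
Local Notation x0 := (nseq_tuple d 0 : V).
Variables (mu : probability V R) (kap : probability_kernel V (measurableTypeR R) R).
Local Open Scope ereal_scope.

Lemma int_prodX_congr_ae (G : set V) n (F F' : seq V -> \bar R) :
  measurable (~` G) -> mu (~` G) = 0 ->
  (forall xs, size xs = n -> (forall x, x \in xs -> G x) -> F xs = F' xs) ->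
  int_prodX mu n F = int_prodX mu n F'.
Proof.
move=> mG G0; elim: n F F' => [|n IH] F F' FF' /=.
  by apply: FF' => // x; rewrite in_nil.
apply: (@integral_eq_off_null _ _ _ mu (~` G)) => // x /= /contrapT Gx.
apply: IH => xs sxs Gxs; apply: FF'; first by rewrite /= sxs.
by move=> z; rewrite in_cons => /orP [/eqP ->|/Gxs].
Qed.

Lemma int_resp_affine (xs : seq V) (c : R) (a : nat -> R) :
  (forall x, x \in xs -> finite_sqmoment kap x) ->
  int_resp kap xs (fun ys => (c + \sum_(l < size xs) a l * nth 0 ys l)%:E)
  = (c + \sum_(l < size xs) a l * cond_mean kap (nth x0 xs l))%:E.
Proof.
elim: xs c a => [|x xs IH] c a Gxs /=; first by rewrite !big_ord0.
have Gx : finite_sqmoment kap x by apply: Gxs; rewrite mem_head.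
have Gxs' z : z \in xs -> finite_sqmoment kap z.
  by move=> zxs; apply: Gxs; rewrite in_cons zxs orbT.
have int_tail y : int_resp kap xs
    (fun ys => (c + \sum_(l < (size xs).+1) a l * (y :: ys)`_l)%:E) =
    ((c + \sum_(i < size xs) a i.+1 * cond_mean kap (nth x0 xs i)) + a 0 * y)%:E.
  rewrite (_ : (c + _ + _ = (c + a 0 * y) +
      \sum_(i < size xs) a i.+1 * cond_mean kap (nth x0 xs i))%R); last by ring.
  rewrite -(IH (c + a 0 * y)%R (fun l => a l.+1))//; congr int_resp.
  by apply/funext => ys; rewrite big_ord_recl /= addrA.
under eq_integral do rewrite int_tail.
by rewrite integral_kernel_affine// big_ord_recl /=; congr (_%:E); ring.
Qed.

Fixpoint prod_indexed (phi : nat -> V -> R) (xs : seq V) : R :=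
  if xs is x :: xs' then (phi 0 x * prod_indexed (fun l => phi l.+1) xs')%R
  else 1%R.

Lemma prod_indexedE phi xs :
  prod_indexed phi xs = (\prod_(l < size xs) phi l (nth x0 xs l))%R.
Proof.
elim: xs phi => [|x xs IH] phi /=; first by rewrite big_ord0.
by rewrite big_ord_recl /= IH.
Qed.

Lemma int_prodX_sum_prod (I : finType) n (c : I -> R) (phi : I -> nat -> V -> R) :
  (forall t, c t != 0%R -> forall l, (l < n)%N ->
      mu.-integrable setT (fun x => (phi t l x)%:E)) ->
  int_prodX mu n (fun xs => (\sum_t c t * prod_indexed (phi t) xs)%:E) =
  (\sum_t c t * \prod_(l < n) fine (\int[mu]_x (phi t l x)%:E))%:E.
Proof.
elim: n c phi => [|n IH] c phi hint /=.
  by congr (_%:E); apply: eq_bigr => t _; rewrite big_ord0.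
set P := fun t => (\prod_(l < n) fine (\int[mu]_x (phi t l.+1 x)%:E))%R.
have int_tail x : int_prodX mu n
      (fun s => (\sum_t c t * prod_indexed (phi t) (x :: s))%:E) =
    (\sum_t (c t * P t) * phi t 0 x)%:E.
  transitivity (int_prodX mu n (fun s =>
      (\sum_t (c t * phi t 0 x) * prod_indexed (fun l => phi t l.+1) s)%:E)).
    congr int_prodX; apply/funext => s; congr (_%:E).
    by apply: eq_bigr => t _ /=; rewrite mulrA.
  rewrite IH; last first.
    move=> t ct l ln; apply: hint => //.
    by apply: contraNneq ct => ->; rewrite mul0r.
  by congr (_%:E); apply: eq_bigr => t _; rewrite /P; ring.
under eq_integral do rewrite int_tail -sumEFin.
have hint' t : mu.-integrable setT (fun x => ((c t * P t) * phi t 0 x)%:E).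
  have [->|ct] := eqVneq (c t) 0%R.
    apply: (eq_integrable _ (cst 0%E)) => //; last exact: integrable0.
    by move=> x _; rewrite !mul0r.
  under eq_fun do rewrite EFinM.
  by apply: integrableZl => //; exact: hint.
rewrite integral_sum// -sumEFin; apply: eq_bigr => t _.
have [->|ct] := eqVneq (c t) 0%R.
  by rewrite !mul0r; under eq_integral do rewrite !mul0r; rewrite integral0.
under eq_integral do rewrite EFinM.
rewrite integralZl//; last exact: hint.
rewrite big_ord_recl -/(P t) /= -[in LHS](@fineK _ (\int[mu]_x _)); last first.
  by apply: integrable_fin_num => //; exact: hint.
by rewrite -EFinM; congr (_%:E); ring.
Qed.

End sample_integrals.

Section column_replacement.
Context {R : Type}.

Definition col_repl {p q} (M : 'M[R]_(p, q)) (j : 'I_q) (b : 'cV[R]_p) : 'M[R]_(p, q) :=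
  \matrix_(a, c) if c == j then b a 0 else M a c.

End column_replacement.

Section cramer.
Variable R : fieldType.

Lemma cofactor_col_repl n (M : 'M[R]_n) j b l :
  cofactor (col_repl M j b) l j = cofactor M l j.
Proof.
rewrite /cofactor; congr (_ * \det _); apply/matrixP => a c.
by rewrite !mxE eq_sym (negbTE (neq_lift j c)).
Qed.

Lemma cramer_rule n (M : 'M[R]_n) (b : 'cV[R]_n) j : M \in unitmx ->
  (invmx M *m b) j 0 = \det (col_repl M j b) / \det M.
Proof.
move=> uM; rewrite /invmx uM -scalemxAl mxE mxE mulrC.
congr (_ * _); rewrite (expand_det_col _ j); apply: eq_bigr => l _.
by rewrite cofactor_col_repl !mxE eqxx mulrC.
Qed.

Lemma col_repl_mulmx p k n (A : 'M[R]_(p, k)) (M : 'M[R]_(k, n)) j (b : 'cV[R]_k) :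
  col_repl (A *m M) j (A *m b) = A *m col_repl M j b.
Proof.
apply/matrixP => a c; rewrite !mxE.
by case: eqVneq => [->|cj]; apply: eq_bigr => i _; rewrite !mxE ?eqxx ?(negbTE cj).
Qed.

End cramer.

Section pseudoinverse.
Variable R : realType.

Lemma mp_pinvE k n (A : 'M[R]_(k, n)) : A^T *m A \in unitmx ->
  mp_pinv A = invmx (A^T *m A) *m A^T.
Proof.
move=> uN; set N := A^T *m A.
have NT : N^T = N by rewrite /N trmx_mul trmxK.
have invNA : invmx N *m A^T *m A = 1%:M by rewrite -mulmxA mulVmx.
apply: xget_unique.
  split.
  - by rewrite -mulmxA invNA mulmx1.
  - by rewrite invNA mul1mx.
  - by rewrite mulmxA !trmx_mul trmxK trmx_inv NT mulmxA.
  - by rewrite invNA trmx1.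
move=> B [ABA _ ABsym _].
have <- : N *m B = A^T by rewrite /N -mulmxA -ABsym -trmx_mul ABA.
by rewrite mulKmx.
Qed.

Lemma mulmx_trmx_eq0 k n (X : 'M[R]_(k, n)) (v : 'rV[R]_n) :
  v *m (X^T *m X) = 0 -> v *m X^T = 0.
Proof.
move=> vN; have : (v *m X^T) *m (v *m X^T)^T = 0.
  by rewrite trmx_mul trmxK mulmxA -(mulmxA v) vN mul0mx.
move=> /matrixP /(_ 0 0); rewrite !mxE => /eqP.
rewrite psumr_eq0; last by move=> i _; rewrite !mxE -expr2 sqr_ge0.
move=> /allP sq0; apply/matrixP => a b; rewrite (ord1 a) !mxE.
move: (sq0 b (mem_index_enum _)); rewrite !mxE -expr2 sqrf_eq0.
by move=> /eqP.
Qed.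

Lemma det_mulmx_pinv k n (X : 'M[R]_(k, n)) (m : 'cV[R]_k) j :
  \det (X^T *m X) * (mp_pinv X *m m) j 0 = \det (X^T *m col_repl X j m).
Proof.
have [u|nu] := boolP (X^T *m X \in unitmx).
  rewrite mp_pinvE// -mulmxA cramer_rule// col_repl_mulmx mulrC -mulrA.
  by rewrite mulVf ?mulr1// -unitfE -unitmxE.
move: nu; rewrite unitmxE unitfE negbK => /eqP dN; rewrite dN mul0r.
apply/esym/eqP/det0P; move/eqP/det0P: dN => [v v0 /mulmx_trmx_eq0 vX].
by exists v => //; rewrite mulmxA vX mul0mx.
Qed.

End pseudoinverse.

Section determinant_expansion.
Variable R : comPzRingType.

Lemma det_trmx_mul_expand k n (X Z : 'M[R]_(k, n)) :
  \det (X^T *m Z) = \sum_(f : {ffun 'I_n -> 'I_k}) \sum_(s : 'S_n)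
     (if injectiveb f then (-1) ^+ s * \prod_i (X (f i) i * Z (f i) (s i)) else 0).
Proof.
rewrite /determinant.
under eq_bigr => s _.
  rewrite (eq_bigr (fun i => \sum_l X l i * Z l (s i))); last first.
    by move=> i _; rewrite !mxE; apply: eq_bigr => l _; rewrite mxE.
  rewrite bigA_distr_bigA big_distrr /=.
  over.
rewrite exchange_big; apply: eq_bigr => f _.
case: (boolP (injectiveb f)) => // /injectivePn [i1 [i2 i12 fi12]].
(* a non-injective f contributes the determinant of a matrix with two equal rows *)
transitivity ((\prod_i X (f i) i) * \det (\matrix_(i, b) Z (f i) b)).
  rewrite /determinant big_distrr; apply: eq_bigr => s _ /=.
  rewrite big_split /= mulrCA; congr (_ * (_ * _)).
  by apply: eq_bigr => i _; rewrite mxE.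
rewrite (determinant_alternate i12) ?mulr0; first by rewrite big1.
by move=> b; rewrite !mxE fi12.
Qed.

Lemma prod_fibers n k (f : 'I_n -> 'I_k) (F : 'I_n -> nat -> R) :
  \prod_(l < k) \prod_(i | (f i : nat) == l) F i l = \prod_i F i (f i).
Proof.
rewrite (eq_bigr (fun l : 'I_k => \prod_i (if (f i : nat) == l then F i l else 1)));
  last by move=> l _; rewrite big_mkcond.
rewrite exchange_big; apply: eq_bigr => i _ /=.
by rewrite -big_mkcond /= (big_pred1 (f i)) // => l /=; rewrite eq_sym.
Qed.

Lemma prod_fiber_inj n k (f : 'I_n -> 'I_k) (F : 'I_n -> R) (l : nat) :
  injective f ->
  \prod_(i | (f i : nat) == l) F i =
    if [pick i | (f i : nat) == l] is Some i0 then F i0 else 1.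
Proof.
move=> finj; case: pickP => [i0 fi0|none]; last by rewrite big_pred0.
rewrite (big_pred1 i0)// => i; apply/idP/idP => [/eqP fi|/eqP ->//].
by apply/eqP/finj/val_inj; rewrite /= fi (eqP fi0).
Qed.

End determinant_expansion.
Arguments prod_fiber_inj {R n k f} F l.

Section second_moments.
Context {R : realType} {d : nat}.
Local Notation V := (d.-tuple R).
Variables (mu : probability V R) (kap : probability_kernel V (measurableTypeR R) R).
Hypothesis hx : (\int[mu]_x (\sum_(i < d) tnth x i ^+ 2)%:E < +oo)%E.
Hypothesis hy : (\int[mu]_x cond_sqmoment kap x < +oo)%E.

Definition sqnorm (x : V) : R := \sum_(i < d) tnth x i ^+ 2.

Lemma sqnorm_ge0 x : 0 <= sqnorm x.
Proof. by apply: sumr_ge0 => i _; exact: sqr_ge0. Qed.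

Lemma sqr_le_sqnorm (x : V) a : tnth x a ^+ 2 <= sqnorm x.
Proof. by rewrite /sqnorm (bigD1 a)//= lerDl; apply: sumr_ge0 => i _; exact: sqr_ge0. Qed.

Lemma integrable_sqnorm : mu.-integrable setT (fun x => (sqnorm x)%:E).
Proof.
apply/integrableP; split.
  apply/measurable_EFinP; apply: measurable_sum => i.
  exact: measurableT_comp (exprn_measurable _) (measurable_tnth i).
by under eq_integral do rewrite gee0_abs ?lee_fin ?sqnorm_ge0//.
Qed.

Lemma integrable_coord_mul (a b : 'I_d) :
  mu.-integrable setT (fun x => (tnth x a * tnth x b)%:E).
Proof.
apply: (le_integrable _ _ _ integrable_sqnorm) => //.
  by apply/measurable_EFinP; apply: measurable_funM; exact: measurable_tnth.
move=> x _; rewrite (gee0_abs (x := (sqnorm x)%:E)) ?lee_fin ?sqnorm_ge0//.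
have ha := sqr_le_sqnorm x a; have hb := sqr_le_sqnorm x b.
by have [h|h] := ger0P (tnth x a * tnth x b); nra.
Qed.

Lemma integrable_coord_mul_cond_mean (a : 'I_d) :
  mu.-integrable setT (fun x => (tnth x a * cond_mean kap x)%:E).
Proof.
have intM := integrable_cond_sqmoment kap hy.
apply: (le_integrable _ _ _ (integrableD _ integrable_sqnorm intM)) => //.
  apply/measurable_EFinP.
  by apply: measurable_funM; [exact: measurable_tnth|exact: measurable_cond_mean].
move=> x _; rewrite (gee0_abs (adde_ge0 _ (cond_sqmoment_ge0 _ _))); last first.
  by rewrite lee_fin sqnorm_ge0.
have [Gx|nGx] := pselect (finite_sqmoment kap x); last first.
  have -> : cond_sqmoment kap x = +oo%E.
    by move/negP: nGx; rewrite /finite_sqmoment /= -leNgt leye_eq => /eqP.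
  by rewrite addey// leey.
rewrite EFinM abseM cond_meanE//.
apply: (le_trans (lee_wpmul2l _ (le_abse_integral _ _ _))) => //.
rewrite -ge0_integralZl//; last first.
  by apply: measurableT_comp; [exact: abse_measurable|
                               apply/measurable_EFinP; exact: measurable_id].
apply: (@le_trans _ _ (\int[kap x]_y ((tnth x a ^+ 2)%:E + (y ^+ 2)%:E))%E).
  apply: ge0_le_integral => //.
  - apply: emeasurable_funM; first exact: measurable_cst.
    by apply: measurableT_comp; [exact: abse_measurable|
                                 apply/measurable_EFinP; exact: measurable_id].
  - apply: emeasurable_funD; first exact: measurable_cst.
    by apply/measurable_EFinP; exact: exprn_measurable.
  move=> y _; rewrite !abse_EFin -EFinM -EFinD lee_fin -normrM.
  by have [h|h] := ger0P (tnth x a * y); nra.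
rewrite ge0_integralD//; try (by move=> y _; rewrite lee_fin sqr_ge0);
  try (by apply/measurable_EFinP; exact: exprn_measurable); try exact: measurable_cst.
have := integral_cst (kap x) (@measurableT _ (measurableTypeR R)) (tnth x a ^+ 2)%:E.
by rewrite /cst => ->; rewrite prob_kernel mule1 leeD// lee_fin sqr_le_sqnorm.
Qed.

End second_moments.

Section volume_sampling.
Context {R : realType} {d : nat}.
Local Notation V := (d.-tuple R).
Local Notation x0 := (nseq_tuple d 0 : V).
Variables (mu : probability V R) (kap : probability_kernel V (measurableTypeR R) R)
  (j : 'I_d).

(* the row of X_j(m) belonging to the sample point x *)
Definition mean_row (x : V) (b : 'I_d) : R :=
  if b == j then cond_mean kap x else tnth x b.

Definition cond_mean_vec k (xs : seq V) : 'cV[R]_k :=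
  \col_(l < k) cond_mean kap (nth x0 xs l).

Definition vs_normaliser k : R := (d`!)%:R * ('C(k, d))%:R * \det (Sigma_X mu).

Lemma vs_density_int_resp_wstar (xs : seq V) :
  (forall x, x \in xs -> finite_sqmoment kap x) ->
  ((vs_density mu (size xs) xs)%:E *
    int_resp kap xs (fun ys => (wstar_sample (size xs) xs ys j 0)%:E))%E
  = (\det ((design_mx (size xs) xs)^T *m
       col_repl (design_mx (size xs) xs) j (cond_mean_vec (size xs) xs))
     / vs_normaliser (size xs))%:E.
Proof.
move=> Gxs; set n := size xs; set X := design_mx n xs; set P := mp_pinv X.
pose a l := nth 0 [seq P j i | i <- enum 'I_n] l.
have aE (i : 'I_n) : a i = P j i.
  by rewrite /a (nth_map i) ?size_enum_ord ?ltn_ord// nth_ord_enum.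
have -> : (fun ys => (wstar_sample n xs ys j 0)%:E) =
    (fun ys => (0 + \sum_(l < size xs) a l * nth 0 ys l)%:E).
  apply/funext => ys; rewrite /wstar_sample mxE add0r.
  by congr (_%:E); apply: eq_bigr => i _; rewrite aE mxE.
rewrite int_resp_affine// add0r.
have -> : \sum_(l < size xs) a l * cond_mean kap (nth x0 xs l) =
    (P *m cond_mean_vec n xs) j 0.
  by rewrite mxE; apply: eq_bigr => i _; rewrite aE mxE.
by rewrite /vs_density -EFinM -det_mulmx_pinv mulrAC.
Qed.

Definition expand_index k := ({ffun 'I_d -> 'I_k} * 'S_d)%type.

Definition expand_coef {k} (t : expand_index k) : R :=
  if injectiveb t.1 then (-1) ^+ t.2 / vs_normaliser k else 0.

Definition expand_factor {k} (t : expand_index k) (l : nat) (x : V) : R :=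
  \prod_(i < d | (t.1 i : nat) == l) (tnth x i * mean_row x (t.2 i)).

Lemma vs_det_expand k xs : size xs = k ->
  \det ((design_mx k xs)^T *m col_repl (design_mx k xs) j (cond_mean_vec k xs))
    / vs_normaliser k
  = \sum_(t : expand_index k) expand_coef t * prod_indexed (expand_factor t) xs.
Proof.
move=> sxs; rewrite det_trmx_mul_expand big_distrl /=.
rewrite [RHS](eq_bigr (fun t => expand_coef (t.1, t.2) *
                                prod_indexed (expand_factor (t.1, t.2)) xs)); last by case.
rewrite -(pair_big xpredT xpredT (fun f s =>
  expand_coef (f, s) * prod_indexed (expand_factor (f, s)) xs)) /=.
apply: eq_bigr => f _; rewrite big_distrl; apply: eq_bigr => s _ /=.
rewrite /expand_coef /=; case: injectiveb; last by rewrite !mul0r.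
rewrite prod_indexedE /expand_factor /= sxs.
rewrite (@prod_fibers _ _ _ f (fun i l =>
  tnth (nth x0 xs l) i * mean_row (nth x0 xs l) (s i))).
rewrite mulrAC; congr (_ * _); apply: eq_bigr => i _.
by rewrite !mxE /mean_row; case: eqP => _; rewrite ?mxE.
Qed.

Definition mean_moment (a b : 'I_d) : R :=
  fine (\int[mu]_x (tnth x a * mean_row x b)%:E)%E.

Section integrability.
Hypothesis hx : (\int[mu]_x (\sum_(i < d) tnth x i ^+ 2)%:E < +oo)%E.
Hypothesis hy : (\int[mu]_x cond_sqmoment kap x < +oo)%E.

Lemma integrable_mean_row a b :
  mu.-integrable setT (fun x => (tnth x a * mean_row x b)%:E).
Proof.
rewrite /mean_row; case: eqP => _; first exact: integrable_coord_mul_cond_mean.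
exact: integrable_coord_mul.
Qed.

Lemma integrable_expand_factor k (t : expand_index k) l : injectiveb t.1 ->
  mu.-integrable setT (fun x => (expand_factor t l x)%:E).
Proof.
move=> /injectiveP finj; rewrite /expand_factor.
under eq_fun do rewrite (prod_fiber_inj _ _ finj).
case: pickP => [i0 _|_]; first exact: integrable_mean_row.
exact: finite_measure_integrable_cst.
Qed.

End integrability.

Lemma integral_expand_factor k (t : expand_index k) l : injectiveb t.1 ->
  fine (\int[mu]_x (expand_factor t l x)%:E)%E =
  \prod_(i | (t.1 i : nat) == l) mean_moment i (t.2 i).
Proof.
move=> /injectiveP finj; rewrite /expand_factor (prod_fiber_inj _ _ finj).
under eq_integral do rewrite (prod_fiber_inj _ _ finj).
case: pickP => // _; rewrite integral_cst// mul1e.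
by apply: (@eq_trans _ _ (fine 1%E)); [congr fine; exact: probability_setT|].
Qed.

Lemma sum_expand_moments k :
  \sum_(t : expand_index k) expand_coef t *
      \prod_(l < k) fine (\int[mu]_x (expand_factor t l x)%:E)%E
  = (k ^_ d)%:R * \det (\matrix_(a, b) mean_moment a b) / vs_normaliser k.
Proof.
transitivity (\sum_(t : expand_index k) expand_coef t *
                \prod_i mean_moment i (t.2 i)).
  apply: eq_bigr => t _; rewrite /expand_coef.
  case: (boolP (injectiveb t.1)) => inj; last by rewrite !mul0r.
  congr (_ * _); rewrite -(@prod_fibers _ _ _ t.1 (fun i _ => mean_moment i (t.2 i))).
  by apply: eq_bigr => l _; exact: integral_expand_factor.
rewrite [LHS](eq_bigr (fun t => expand_coef (t.1, t.2) *
                                \prod_i mean_moment i (t.2 i))); last by case.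
rewrite -(pair_big xpredT xpredT (fun f s =>
  expand_coef (f, s) * \prod_i mean_moment i (s i))) /=.
rewrite (eq_bigr (fun f : {ffun 'I_d -> 'I_k} => if injectiveb f then
    \det (\matrix_(a, b) mean_moment a b) / vs_normaliser k else 0)); last first.
  move=> f _; rewrite /expand_coef /=.
  case: injectiveb; last by rewrite big1// => s _; rewrite mul0r.
  rewrite /determinant big_distrl /=; apply: eq_bigr => s _.
  by rewrite mulrAC; congr (_ * _ * _); apply: eq_bigr => i _; rewrite mxE.
rewrite -big_mkcond /= sumr_const.
have -> : #|[pred f : {ffun 'I_d -> 'I_k} | injectiveb f]| = (k ^_ d)%N.
  by have := card_inj_ffuns 'I_d 'I_k; rewrite !card_ord => <-; rewrite cardsE.
by rewrite -mulrA mulr_natl.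
Qed.

Lemma mean_moment_mx : (\int[mu]_x cond_sqmoment kap x < +oo)%E ->
  \matrix_(a, b) mean_moment a b = col_repl (Sigma_X mu) j (cross_moment mu kap).
Proof.
move=> hy; apply/matrixP => a b; rewrite !mxE /mean_moment /mean_row.
case: eqP => // _; congr fine; apply/esym.
apply: (@integral_eq_off_null _ _ _ mu (~` finite_sqmoment kap)).
- exact: measurableC_finite_sqmoment.
- exact: finite_sqmoment_ae.
move=> x /= /contrapT Gx.
rewrite -[in RHS](add0r (_ * _)) -integral_kernel_affine//.
by apply: eq_integral => y _; rewrite add0r.
Qed.

End volume_sampling.

Theorem theorem2 (R : realType) (d k : nat)
  (mu : probability (d.-tuple R) R)
  (kap : probability_kernel (d.-tuple R) (measurableTypeR R) R) :
  (d <= k)%N ->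
  (\int[mu]_x (\sum_(i < d) tnth x i ^+ 2)%:E < +oo)%E ->
  (\int[mu]_x \int[kap x]_y (y ^+ 2)%:E < +oo)%E ->
  Sigma_X mu \in unitmx ->
  forall j : 'I_d,
    E_VS mu kap k (fun xs ys => wstar_sample k xs ys j 0) = (wstar_D mu kap j 0)%:E.
Proof.
move=> dk hx hy hS j; rewrite /E_VS.
rewrite (@int_prodX_congr_ae _ _ mu (finite_sqmoment kap) k _ (fun xs =>
    (\sum_(t : expand_index k) expand_coef mu t *
       prod_indexed (expand_factor kap j t) xs)%:E)); last 3 first.
- exact: measurableC_finite_sqmoment.
- exact: finite_sqmoment_ae.
- by move=> xs <- Gxs; rewrite vs_density_int_resp_wstar// vs_det_expand.
rewrite int_prodX_sum_prod; last first.
  move=> t ct0 l _; apply: integrable_expand_factor => //.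
  by move: ct0; rewrite /expand_coef; case: injectiveb; rewrite ?eqxx.
rewrite sum_expand_moments mean_moment_mx// /wstar_D cramer_rule//.
have detS : \det (Sigma_X mu) != 0 by rewrite -unitfE -unitmxE.
have ffact_neq0 : (k ^_ d)%:R != 0 :> R by rewrite pnatr_eq0 -lt0n ffact_gt0.
rewrite /vs_normaliser -natrM mulnC bin_ffact; congr (_%:E); field.
by rewrite detS ffact_neq0.
Qed.
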